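(* Let $\alpha \in [0,1)$, let $T$ be any monotone total order on $\Omega$, let $\mathbf{x} \in \Omega$, and let $k \in \{0,\dots,m-2\}$ be such that $\mathbf{S}_k \le_T \mathbf{x} \le_T \mathbf{S}_{k+1}$, where $\mathbf{S}_j = (S_j,\dots,S_j)$ denotes a homogeneous sample. Then $$B_{T_h}^*(\mathbf{S}_k) \le B_T^*(\mathbf{x}) \le B_{T_\ell}^*(\mathbf{S}_{k+1}).$$
   Context: Fix integers $m \ge 2$, $n \ge 1$ and reals $S_{\min} < S_{\max}$; $S = \{S_0,\dots,S_{m-1}\}$ with $S_k = S_{\min} + k\frac{S_{\max}-S_{\min}}{m-1}$. $\mathcal{F}$ is the set of probability distributions on $S$, identified with the probability simplex in $\mathbb{R}^m$ with the Euclidean topology; $E[F]$ is the mean. $\Omega$ is the set of samples of size $n$ from $S$, identified with their sorted versions $x_{(1)} \le \dots \le x_{(n)}$. $P_F[\Omega']$ is the probability that the sorted sample of $n$ i.i.d. draws from $F$ lies in $\Omega' \subseteq \Omega$; $\mathcal{G}(\Omega',\alpha) = \{F : P_F[\Omega'] > \alpha\}$ and $\mathcal{F}(\Omega',\alpha)$ is its closure. For a total order $T$ on $\Omega$, $\Omega(\mathbf{x},T) = \{\mathbf{y} : \mathbf{x} \le_T \mathbf{y}\}$ and the pessimal (conditionally optimal) bound is $B_T^*(\mathbf{x}) = \min\{E[F] : F \in \mathcal{F}(\Omega(\mathbf{x},T),\alpha)\}$ (standing assumption: the sets involved are nonempty). $\mathbf{x} \le \mathbf{y}$ means $x_{(j)}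 \le y_{(j)}$ for all $j$; $T$ is monotone if $\mathbf{x} \le \mathbf{y}$ implies $\mathbf{x} \le_T \mathbf{y}$. $T_\ell$ (low lexicographic): $\mathbf{x} \le_{T_\ell} \mathbf{y}$ iff $\mathbf{x}=\mathbf{y}$ or at the smallest index $j$ with $x_{(j)} \ne y_{(j)}$ we have $x_{(j)} < y_{(j)}$. $T_h$ (high lexicographic): same with the largest such index. *)

From HB Require Import structures.
From mathcomp Require Import all_boot all_order all_algebra.
From mathcomp Require Import classical_sets boolp reals topology normedtype.
Import numFieldNormedType.Exports.
Set Implicit Arguments. Unset Strict Implicit. Unset Printing Implicit Defensive.
Import Order.TTheory GRing.Theory Num.Theory.
Local Open Scope classical_set_scope.
Local Open Scope ring_scope.

(* Support points are indexed by 'I_m : index k stands for S_k. *)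
Definition Spt {R : realType} (m : nat) (Smin Smax : R) (k : 'I_m) : R :=
  Smin + (k%:R) * ((Smax - Smin) / (m.-1)%:R).

(* Sorted samples of size n from S (as sorted index tuples). *)
Definition ord_le (m : nat) : rel 'I_m := fun a b => (a <= b)%N.
Definition Omega (m n : nat) := {x : n.-tuple 'I_m | sorted (@ord_le m) x}.

(* Probability distributions on S: the probability simplex in R^m
   (row vectors, with the product = Euclidean topology). *)
Definition simplex {R : realType} (m : nat) : set 'rV[R]_m :=
  [set F | (forall i, 0 <= F ord0 i) /\ \sum_(i < m) F ord0 i = 1].

Definition mean {R : realType} (m : nat) (Smin Smax : R) (F : 'rV[R]_m) : R :=
  \sum_(i < m) F ord0 i * Spt Smin Smax i.

(* P_F[Om']: probability that the sorted sample of n iid draws from F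
   lies in Om'. *)
Definition probF {R : realType} (m n : nat) (F : 'rV[R]_m) (Om' : pred (Omega m n)) : R :=
  \sum_(w : n.-tuple 'I_m |
          [exists y : Omega m n, (y \in Om') && (tval (val y) == sort (@ord_le m) w)])
     \prod_(i < n) F ord0 (tnth w i).

Definition Gset {R : realType} (m n : nat) (Om' : pred (Omega m n)) (alpha : R)
  : set 'rV[R]_m := [set F | @simplex R m F /\ probF F Om' > alpha].

Definition Fset {R : realType} (m n : nat) (Om' : pred (Omega m n)) (alpha : R)
  : set 'rV[R]_m := @closure 'rV[R]_m (Gset Om' alpha).

Definition Omega_up (m n : nat) (T : rel (Omega m n)) (x : Omega m n) : pred (Omega m n) :=
  [pred y | T x y].

(* Pessimal bound B_T^*(x) = min { E[F] : F in F(Omega(x,T),alpha) }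
   (the min exists; we write it as the infimum). *)
Definition Bstar {R : realType} (m n : nat) (Smin Smax alpha : R)
  (T : rel (Omega m n)) (x : Omega m n) : R :=
  inf [set mean Smin Smax F | F in Fset (Omega_up T x) alpha].

Definition is_total_order (A : Type) (T : rel A) : Prop :=
  [/\ reflexive T, antisymmetric T, transitive T & total T].

Definition sample_le (m n : nat) (x y : Omega m n) : Prop :=
  forall j : 'I_n, (tnth (val x) j <= tnth (val y) j)%N.

Definition monotone_order (m n : nat) (T : rel (Omega m n)) : Prop :=
  forall x y, sample_le x y -> T x y.

Definition T_low (m n : nat) : rel (Omega m n) := fun x y =>
  (x == y) ||
  [exists j : 'I_n,
     [forall i : 'I_n, (i < j)%N ==> (tnth (val x) i == tnth (val y) i)]
     && (tnth (val x) j < tnth (val y) j)%N].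

Definition T_high (m n : nat) : rel (Omega m n) := fun x y =>
  (x == y) ||
  [exists j : 'I_n,
     [forall i : 'I_n, (j < i)%N ==> (tnth (val x) i == tnth (val y) i)]
     && (tnth (val x) j < tnth (val y) j)%N].

Lemma hom_sorted (m n : nat) (k : 'I_m) :
  sorted (@ord_le m) [tuple of nseq n k].
Proof.
rewrite /=; elim: n => [|n IH] //=; case: n IH => [|n] //= IH.
by rewrite /ord_le leqnn.
Qed.

Definition hom_sample (m n : nat) (k : 'I_m) : Omega m n :=
  exist _ [tuple of nseq n k] (hom_sorted n k).

(* Bstar is the infimum of the mean over the closure of the alpha-superlevel set of
   an event, so it is antitone in the event Omega(x, T).  It therefore suffices to
   show that Omega(x, T) is contained in Omega(S_k, T_h) and Omega(S_(k+1), T_l)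
   in Omega(x, T).
   A sample y that is not above S_k for T_h has all its entries at most k, so
   y <= S_k coordinatewise and monotonicity of T squeezes y = S_k; a sample above
   S_(k+1) for T_l has smallest entry at least k+1, so S_(k+1) <= y coordinatewise.
   All infima are over nonempty sets, which contain the Dirac mass at S_(k+1), and
   are bounded below by S_min. *)

From HB Require Import structures.
From mathcomp Require Import all_boot all_order all_algebra.
From mathcomp Require Import classical_sets boolp reals topology normedtype.
Import numFieldNormedType.Exports.
Set Implicit Arguments. Unset Strict Implicit. Unset Printing Implicit Defensive.
Import Order.TTheory GRing.Theory Num.Theory.
Local Open Scope ring_scope.

Section Samples.

Variables m n : nat.
Implicit Types (y : Omega m n) (k : 'I_m).

Lemma sample_tnth_mono y (i j : 'I_n) :
  (i <= j)%N -> (tnth (val y) i <= tnth (val y) j)%N.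
Proof.
case: y => t st /= ij; have x0 := tnth t i; rewrite !(tnth_nth x0).
have ord_le_trans : transitive (@ord_le m) by move=> a b c; apply: leq_trans.
have ord_le_refl : reflexive (@ord_le m) by move=> a; apply: leqnn.
by apply: (sorted_leq_nth ord_le_trans ord_le_refl x0 st); rewrite ?inE ?size_tuple.
Qed.

Lemma T_low_hom_sample_le k y :
  T_low (hom_sample n k) y -> sample_le (hom_sample n k) y.
Proof.
case/orP=> [/eqP <- i | /existsP [j /andP [/forallP eq_before lt_j]]] /=.
  by rewrite leqnn.
have n_gt0 : (0 < n)%N by apply: leq_ltn_trans (ltn_ord j).
pose i0 : 'I_n := Ordinal n_gt0.
have k_le_y0 : (k <= tnth (val y) i0)%N.
  move: lt_j; rewrite tnth_nseq; have [j0 | j_gt0] := posnP j.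
    have -> : j = i0 by apply: val_inj; rewrite /= j0.
    exact: ltnW.
  by move: (eq_before i0); rewrite /= j_gt0 tnth_nseq => /eqP <-.
by move=> i; rewrite tnth_nseq (leq_trans k_le_y0) // sample_tnth_mono.
Qed.

Lemma T_high_hom_sample_or_le k y :
  T_high (hom_sample n k) y \/ sample_le y (hom_sample n k).
Proof.
have [j k_lt_yj | y_le] := pickP (fun j : 'I_n => k < tnth (val y) j)%N; last first.
  by right=> i /=; rewrite tnth_nseq leqNgt y_le.
left; apply/orP; right.
have n_gt0 : (0 < n)%N by apply: leq_ltn_trans (ltn_ord j).
have last_lt_n : (n.-1 < n)%N by rewrite prednK.
pose l : 'I_n := Ordinal last_lt_n.
have j_le_l : (j <= l)%N by rewrite /= -ltnS prednK.
apply/existsP; exists l.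
rewrite tnth_nseq (leq_trans k_lt_yj (sample_tnth_mono y j_le_l)) andbT.
by apply/forallP => i; apply/implyP; rewrite /= ltnNge -ltnS prednK ?ltn_ord.
Qed.

Variable T : rel (Omega m n).
Hypotheses (HT : is_total_order T) (HTm : monotone_order T).

Lemma Omega_up_sub_T_high k x :
  T (hom_sample n k) x -> {subset Omega_up T x <= Omega_up (@T_high m n) (hom_sample n k)}.
Proof.
case: HT => _ Tanti Ttrans _ Tkx y; rewrite !inE => Txy.
have [// | y_le] := T_high_hom_sample_or_le k y.
have -> : y = hom_sample n k.
  by apply: Tanti; rewrite HTm // (Ttrans x).
by rewrite /T_high eqxx.
Qed.

Lemma Omega_up_T_low_sub k x :
  T x (hom_sample n k) -> {subset Omega_up (@T_low m n) (hom_sample n k) <= Omega_up T x}.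
Proof.
case: HT => _ _ Ttrans _ Txk y; rewrite !inE => /T_low_hom_sample_le k_le_y.
exact: Ttrans Txk (HTm k_le_y).
Qed.

End Samples.

Section Bounds.

Variables (R : realType) (m n : nat) (Smin Smax : R).
Hypothesis Smin_le_Smax : Smin <= Smax.

Lemma probF_subset (F : 'rV[R]_m) (O1 O2 : pred (Omega m n)) :
  (forall i, 0 <= F ord0 i) -> {subset O1 <= O2} -> probF F O1 <= probF F O2.
Proof.
move=> F_ge0 O12; rewrite /probF big_mkcond [leRHS]big_mkcond /=.
apply: ler_sum => w _; case: ifP => [/existsP [y /andP [yO1 yw]] | _].
  by rewrite ifT //; apply/existsP; exists y; rewrite O12.
by case: ifP => // _; apply: prodr_ge0 => i _.
Qed.

Lemma Fset_subset (O1 O2 : pred (Omega m n)) (alpha : R) :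
  {subset O1 <= O2} -> (Fset O1 alpha `<=` Fset O2 alpha)%classic.
Proof.
move=> O12; apply: closureS => F [F_simplex alpha_lt]; split=> //.
by apply: (lt_le_trans alpha_lt); apply: probF_subset O12; case: F_simplex.
Qed.

Lemma Spt_ge_Smin (i : 'I_m) : Smin <= Spt Smin Smax i.
Proof. by rewrite /Spt lerDl mulr_ge0 ?divr_ge0 ?subr_ge0. Qed.

Lemma mean_ge_Smin (F : 'rV[R]_m) : simplex F -> Smin <= mean Smin Smax F.
Proof.
move=> [F_ge0 F_sum1]; rewrite /mean -[leLHS]mul1r -F_sum1 mulr_suml.
by apply: ler_sum => i _; rewrite ler_wpM2l ?Spt_ge_Smin.
Qed.

Lemma continuous_mean : continuous (@mean R m Smin Smax).
Proof.
apply: (@continuous_big _ _ +%R 0 (fun _ => true)); first exact: add_continuous.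
move=> i _ F.
have coord_i : {for F, continuous (fun M : 'rV[R]_m => M ord0 i)}.
  exact: coord_continuous.
have const_i : {for F, continuous (fun _ : 'rV[R]_m => Spt Smin Smax i)}.
  exact: cst_continuous.
exact: continuousM coord_i const_i.
Qed.

Lemma Fset_mean_ge_Smin (O : pred (Omega m n)) (alpha : R) :
  (Fset O alpha `<=` [set F | Smin <= mean Smin Smax F])%classic.
Proof.
have closed_mean_ge : closed [set F : 'rV[R]_m | Smin <= mean Smin Smax F].
  by have := proj1 (continuous_closedP _) continuous_mean _ (@closed_ge R Smin).
rewrite /Fset; move/closure_id: closed_mean_ge => ->.
apply: closureS => F [F_simplex _].
exact: mean_ge_Smin.
Qed.

Definition dirac_row (j : 'I_m) : 'rV[R]_m := \row_i (i == j)%:R.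

Lemma simplex_dirac_row (j : 'I_m) : simplex (dirac_row j).
Proof.
split=> [i | ]; first by rewrite mxE ler0n.
rewrite (bigD1 j) //= big1 ?addr0 ?mxE ?eqxx // => i /negbTE i_neq_j.
by rewrite mxE i_neq_j.
Qed.

Lemma probF_dirac_row_ge1 (j : 'I_m) (O : pred (Omega m n)) :
  hom_sample n j \in O -> 1 <= probF (dirac_row j) O.
Proof.
move=> Oj; rewrite /probF (bigD1 [tuple of nseq n j]) /=; last first.
  apply/existsP; exists (hom_sample n j); rewrite Oj /=.
  have ord_le_trans : transitive (@ord_le m) by move=> a b c; apply: leq_trans.
  by rewrite (sorted_sort ord_le_trans (hom_sorted n j)).
rewrite big1 => [|i _]; last by rewrite tnth_nseq mxE eqxx.
by rewrite lerDl sumr_ge0 // => w _; rewrite prodr_ge0 // => i _; rewrite mxE ler0n.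
Qed.

Lemma Fset_dirac_row (j : 'I_m) (O : pred (Omega m n)) (alpha : R) :
  alpha < 1 -> hom_sample n j \in O -> Fset O alpha (dirac_row j).
Proof.
move=> alpha_lt1 Oj; apply: subset_closure; split; first exact: simplex_dirac_row.
by apply: (lt_le_trans alpha_lt1); apply: probF_dirac_row_ge1.
Qed.

Lemma Bstar_le_of_subset (alpha : R) (T1 T2 : rel (Omega m n)) x1 x2 (j : 'I_m) :
  alpha < 1 -> hom_sample n j \in Omega_up T1 x1 ->
  {subset Omega_up T1 x1 <= Omega_up T2 x2} ->
  Bstar Smin Smax alpha T2 x2 <= Bstar Smin Smax alpha T1 x1.
Proof.
move=> alpha_lt1 up1j up12; apply: lb_le_inf.
  exists (mean Smin Smax (dirac_row j)); exists (dirac_row j) => //.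
  exact: Fset_dirac_row.
move=> _ [F F1 <-]; apply: ge_inf; last by exists F => //; exact: Fset_subset F1.
by exists Smin => _ [G G2 <-]; exact: Fset_mean_ge_Smin G2.
Qed.

End Bounds.

Theorem theorem4 (R : realType) (m n : nat) (Smin Smax alpha : R)
  (Hm : (2 <= m)%N) (Hn : (1 <= n)%N) (HS : Smin < Smax)
  (Ha0 : 0 <= alpha) (Ha1 : alpha < 1)
  (T : rel (Omega m n)) (HT : is_total_order T) (HTm : monotone_order T)
  (x : Omega m n) (k : 'I_m) (Hk : (k.+1 < m)%N)
  (Hlo : T (@hom_sample m n k) x) (Hhi : T x (@hom_sample m n (Ordinal Hk))) :
  Bstar Smin Smax alpha (@T_high m n) (@hom_sample m n k)
    <= Bstar Smin Smax alpha T x /\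
  Bstar Smin Smax alpha T x
    <= Bstar Smin Smax alpha (@T_low m n) (@hom_sample m n (Ordinal Hk)).
Proof.
have Smin_le_Smax := ltW HS.
pose hom_k1 := hom_sample n (Ordinal Hk).
split.
- apply: (Bstar_le_of_subset Smin_le_Smax (j := Ordinal Hk) Ha1 Hhi).
  exact: (Omega_up_sub_T_high HT HTm Hlo).
- have up_hom_k1 : hom_k1 \in Omega_up (@T_low m n) hom_k1 by rewrite inE /T_low eqxx.
  apply: (Bstar_le_of_subset Smin_le_Smax Ha1 up_hom_k1).
  exact: (Omega_up_T_low_sub HT HTm Hhi).
Qed.
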